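(* Let $M\ge 0$. Given an infinite antichain $S_1,S_2,\dots$ in the poset $(\mathrm{RL},\le_{RL})$, where $S_i$ is a reading list of type $(d_i,n_i)$, at least one of the sequences $(n_i)_i$ and $(d_i)_i$ is bounded.
   Context: Fix an integer $M\ge0$. A reading list of type $(d,n)$ is a tuple $S=(S^1,\dots,S^n)$ of $d$-element subsets of $[Md]=\{1,\dots,Md\}$ (each $S^i$ viewed as an increasing word). $\mathrm{RL}$ denotes the set of all reading lists of all types. For $S=(S^1,\dots,S^n)$ of type $(d,n)$ and $T=(T^1,\dots,T^m)$ of type $(e,m)$, define $S\le_{RL}T$ iff there exist indices $1\le k_1<k_2<\cdots<k_n\le m$ and maps $f_i:S^i\to T^{k_i}$ ($i=1,\dots,n$), each strictly increasing, such that $f_i(x)=f_j(x)$ for all $i,j$ and all $x\in S^i\cap S^j$. An antichain is a sequence of pairwise incomparable elements. *)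

From mathcomp Require Import all_boot.
Set Implicit Arguments. Unset Strict Implicit. Unset Printing Implicit Defensive.

(* A reading list: its parameter d together with the tuple (S^1,...,S^n),
   stored as a list (0-indexed) of words; each word is the increasing
   enumeration of a d-element subset of [Md] = {1,...,M*d}. *)
Record RL := mkRL { rl_d : nat; rl_sets : seq (seq nat) }.

Definition rl_n (S : RL) : nat := size (rl_sets S).

Definition rl_at (S : RL) (i : nat) : seq nat := nth [::] (rl_sets S) i.

Definition is_RL (M : nat) (S : RL) : Prop :=
  all (fun s => [&& sorted ltn s, size s == rl_d S &
                    all (fun x => (1 <= x) && (x <= M * rl_d S)) s])
      (rl_sets S).

Definition le_RL (S T : RL) : Prop :=
  exists (k : nat -> nat) (f : nat -> nat -> nat),
    [/\ (forall i, i.+1 < rl_n S -> k i < k i.+1),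
        (forall i, i < rl_n S -> k i < rl_n T),
        (forall i x, i < rl_n S -> x \in rl_at S i -> f i x \in rl_at T (k i)),
        (forall i x y, i < rl_n S -> x \in rl_at S i -> y \in rl_at S i ->
                       x < y -> f i x < f i y) &
        (forall i j x, i < rl_n S -> j < rl_n S ->
                       x \in rl_at S i -> x \in rl_at S j -> f i x = f j x)].

Definition is_infinite_antichain (M : nat) (S : nat -> RL) : Prop :=
  (forall i, is_RL M (S i)) /\
  (forall i j, i <> j -> ~ le_RL (S i) (S j)).

(* If the lengths n_i were unbounded, compare everything with S_0, of type (d, n).
   A reading list of type (e, m) with e >= 2Md and m >= n (2M)^(Md) lies above S_0:
   its sets have e elements inside [Me], so double counting finds an element lying in
   at least a 1/(2M) fraction of them, and iterating Md times gives an Md-set C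
   contained in n of its sets; sending x to the x-th element of C embeds S_0.
   Hence all sufficiently long members of the antichain have d_i < 2Md, so infinitely
   many of them are words over the finite alphabet of subsets of [2M^2 d], and Higman's
   lemma (via a Nash-Williams minimal bad sequence) makes two of them comparable.
   The argument shows that (n_i) itself is always bounded. *)

From mathcomp Require Import all_boot zify.
From Stdlib Require Import Classical ClassicalEpsilon.
Set Implicit Arguments. Unset Strict Implicit. Unset Printing Implicit Defensive.

Lemma ex_minimal (A : Type) (m : A -> nat) (P : A -> Prop) :
  (exists x, P x) -> exists x, P x /\ forall y, m y < m x -> ~ P y.
Proof.
move=> [x Px]; have [n] := ubnP (m x); elim: n x Px => // n IH x Px mx.
case: (classic (exists2 y, m y < m x & P y)) => [[y my Py]|nomin].
  by apply: (IH y Py); apply: leq_trans my _.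
by exists x; split=> // y my Py; apply: nomin; exists y.
Qed.

Lemma infinite_pigeonhole (T : eqType) (h : nat -> T) (s : seq T) :
  (forall n, h n \in s) -> exists a, forall m, exists2 n, m <= n & h n == a.
Proof.
move=> hs; have {hs}: exists m0, forall n, m0 <= n -> h n \in s by exists 0.
elim: s => [|b s IH] [m0 hs]; first by have := hs m0 (leqnn _).
case: (classic (exists m1, forall n, m1 <= n -> h n != b)) => [[m1 hb]|often_b].
  apply: IH => //; exists (maxn m0 m1) => n; rewrite geq_max => /andP[le0 le1].
  by move: (hs n le0); rewrite inE (negbTE (hb n le1)).
exists b => m; apply: NNPP => never; apply: often_b; exists m => n mn.
by apply/negP => hnb; apply: never; exists n.
Qed.

Lemma frequently_subseq (P : pred nat) :
  (forall m, exists2 n, m <= n & P n) ->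
  exists phi : nat -> nat, (forall k, phi k < phi k.+1) /\ (forall k, P (phi k)).
Proof.
move=> often.
have ex_next m : exists n, (m <= n) && P n.
  by have [n mn Pn] := often m; exists n; rewrite mn.
pose next m := xchoose (ex_next m).
have next_ge m : m <= next m by case/andP: (xchooseP (ex_next m)).
have next_P m : P (next m) by case/andP: (xchooseP (ex_next m)).
exists (fun k => iter k (fun n => next n.+1) (next 0)).
by split=> [k|[|k]]; [apply: next_ge | apply: next_P | apply: next_P].
Qed.

Lemma unbounded_frequently (g : nat -> nat) N :
  (forall B, exists i, B < g i) -> forall m, exists2 n, m <= n & N < g n.
Proof.
move=> unb m; have [n] := unb (maxn N (\max_(i < m) g i)).
rewrite gtn_max => /andP[Nn maxn_lt]; exists n => //.
rewrite leqNgt; apply/negP => nm; move: maxn_lt.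
by rewrite ltnNge (@leq_bigmax _ (fun i : 'I_m => g i) (Ordinal nm)).
Qed.

Lemma sorted_ltn_subseq_iota (s : seq nat) B :
  sorted ltn s -> all (fun x => x < B) s -> subseq s (iota 0 B).
Proof.
move=> s_sorted /allP s_lt.
suff -> : s = [seq x <- iota 0 B | x \in s] by apply: filter_subseq.
apply: (irr_sorted_eq ltn_trans ltnn) => //.
  exact: (sorted_filter ltn_trans _ (iota_ltn_sorted 0 B)).
move=> x; rewrite mem_filter mem_iota add0n leq0n /=.
by case: (boolP (x \in s)) => // /s_lt ->.
Qed.

Fixpoint subseqs (T : Type) (s : seq T) : seq (seq T) :=
  if s is x :: s' then [seq x :: t | t <- subseqs s'] ++ subseqs s' else [:: [::]].

Lemma mem_subseqs (T : eqType) (s t : seq T) : subseq t s -> t \in subseqs s.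
Proof.
elim: s t => [|x s IH] [|y t] //=; rewrite mem_cat.
- by move=> _; rewrite IH ?orbT ?sub0seq.
- case: eqP => [-> ts|_ yts]; last by rewrite IH ?orbT.
  by apply/orP; left; apply: map_f; apply: IH.
Qed.

Lemma subseq_nth_index (T : eqType) x0 (s t : seq T) : subseq s t ->
  exists k : nat -> nat, [/\ forall i, k i < k i.+1,
    forall i, i < size s -> k i < size t &
    forall i, i < size s -> nth x0 s i = nth x0 t (k i)].
Proof.
elim: t s => [|y t IH] s; first by rewrite subseq0 => /eqP ->; exists id.
case: s => [|x s] /=; first by exists id.
case: eqP => [-> | _] /IH [k [k_inc k_size k_nth]].
  exists (fun i => if i is i'.+1 then (k i').+1 else 0).
  split=> [[|i]|[|i]|[|i]] //=; rewrite ?ltnS.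
  - exact: k_inc.
  - exact: k_size.
  - exact: k_nth.
exists (fun i => (k i).+1).
by split=> [i|i|i] /=; rewrite ?ltnS; [apply: k_inc|apply: k_size|apply: k_nth].
Qed.

Section Higman.
Variables (T : eqType) (alph : seq T).

Definition bad (w : nat -> seq T) := forall i j, i < j -> ~~ subseq (w i) (w j).

Definition bad_over (w : nat -> seq T) := bad w /\ forall i, {subset w i <= alph}.

Definition extends_bad (p : seq (seq T)) :=
  exists2 w, bad_over w & forall i, i < size p -> w i = nth [::] p i.

Definition shortest_next (p : seq (seq T)) (x : seq T) :=
  extends_bad (rcons p x) /\ forall y, size y < size x -> ~ extends_bad (rcons p y).

Lemma extends_bad_next p : extends_bad p -> exists x, shortest_next p x.
Proof.
move=> [w w_bad w_p]; apply: ex_minimal; exists (w (size p)), w => // i.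
rewrite size_rcons ltnS leq_eqVlt nth_rcons => /predU1P[->|ip].
  by rewrite ltnn eqxx.
by rewrite ip w_p.
Qed.

(* The junk default [::] is never used: [p] will always extend to a bad sequence. *)
Definition next_word (p : seq (seq T)) := epsilon (inhabits [::]) (shortest_next p).

Fixpoint minbad_prefix n :=
  if n is n'.+1 then rcons (minbad_prefix n') (next_word (minbad_prefix n')) else [::].

Definition minbad n := next_word (minbad_prefix n).

Lemma minbad_prefixE n : minbad_prefix n = mkseq minbad n.
Proof. by elim: n => //= n IH; rewrite mkseqS -IH. Qed.

Hypothesis bad_exists : extends_bad [::].

Lemma minbad_shortest n : shortest_next (mkseq minbad n) (minbad n).
Proof.
rewrite -minbad_prefixE; apply: epsilon_spec; apply: extends_bad_next.
elim: n => //= n IH.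
exact: (epsilon_spec (inhabits [::]) _ (extends_bad_next IH)).1.
Qed.

Lemma minbad_extends_bad n :
  exists2 w, bad_over w & forall i, i <= n -> w i = minbad i.
Proof.
have [w w_bad w_n] := (minbad_shortest n).1; exists w => // i i_n.
by rewrite w_n -mkseqS ?size_mkseq ?nth_mkseq.
Qed.

Lemma minbad_bad_over : bad_over minbad.
Proof.
split=> [i j ij|i].
  have [w [w_bad _] w_j] := minbad_extends_bad j.
  by rewrite -!w_j ?w_bad // ltnW.
by have [w [_ w_alph] w_i] := minbad_extends_bad i; rewrite -w_i.
Qed.

Lemma minbad_neq_nil n : minbad n != [::].
Proof. by apply: contraNneq (minbad_bad_over.1 n n.+1 (ltnSn n)) => ->; apply: sub0seq. Qed.

Lemma minimal_bad_contradiction : False.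
Proof.
have [minbad_bad minbad_alph] := minbad_bad_over.
case: (minbad 0) (minbad_neq_nil 0) => [//|x0 _] _.
have head_alph n : head x0 (minbad n) \in alph.
  case: (minbad n) (minbad_neq_nil n) (minbad_alph n) => //= b s _.
  by apply; apply: mem_head.
have [a often_a] := infinite_pigeonhole head_alph.
have [phi [phi_inc phi_a]] := frequently_subseq often_a.
have phi_mono : {homo phi : i j / i < j} := homo_ltn ltn_trans phi_inc.
have phi_cons k : minbad (phi k) = a :: behead (minbad (phi k)).
  by case: (minbad (phi k)) (minbad_neq_nil (phi k)) (phi_a k) => //= b s _ /eqP->.
set p0 := phi 0.
have p0_le k : p0 <= phi k by case: k => // k; apply/ltnW/phi_mono.
(* Beyond [p0], use the tails of the words [minbad (phi k)], which all start with [a]: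
   the sequence stays bad, but its [p0]-th word is shorter than [minbad p0]. *)
pose g n := if n < p0 then minbad n else behead (minbad (phi (n - p0))).
have g_bad : bad g.
  move=> i j ij; rewrite /g; case: ltnP => ip0; case: ltnP => jp0; try lia.
  - exact: minbad_bad.
  - apply: contra (minbad_bad i (phi (j - p0)) (leq_trans ip0 (p0_le _))) => ij_sub.
    by apply: subseq_trans ij_sub _; rewrite [X in subseq _ X]phi_cons subseq_cons.
  - have := minbad_bad _ _ (phi_mono (i - p0) (j - p0) ltac:(lia)).
    by rewrite (phi_cons (i - p0)) (phi_cons (j - p0)) /= eqxx.
have g_alph i : {subset g i <= alph}.
  rewrite /g; case: ifP => _ // x x_tail; apply: (minbad_alph (phi (i - p0))).
  by rewrite phi_cons inE x_tail orbT.
apply: (minbad_shortest p0).2 (g p0) _ _.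
  by rewrite /g ltnn subnn [X in _ < size X]phi_cons.
exists g => // i; rewrite size_rcons size_mkseq ltnS leq_eqVlt nth_rcons size_mkseq.
case/predU1P=> [->|ip0]; first by rewrite ltnn eqxx.
by rewrite ip0 nth_mkseq // /g ip0.
Qed.

End Higman.

Theorem higman (T : eqType) (alph : seq T) (w : nat -> seq T) :
  (forall n, {subset w n <= alph}) -> exists i j, i < j /\ subseq (w i) (w j).
Proof.
move=> w_alph; apply: NNPP => w_good; apply: (minimal_bad_contradiction (alph := alph)).
exists w => //; split=> // i j ij; apply/negP => sub; apply: w_good; by exists i, j.
Qed.

Section CommonSubset.
Variables (T I : eqType) (F : I -> seq T) (c : nat).

Lemma popular_element (W : seq T) (J : seq I) q :
  0 < q -> 0 < size J -> size W <= c * q ->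
  (forall k, k \in J -> q <= count (mem (F k)) W) ->
  exists2 p, p \in W & size J <= c * count (fun k => p \in F k) J.
Proof.
move=> q_gt0 J_gt0 W_le J_q; apply: NNPP => none.
have W_gt0 : 0 < size W.
  have /hasP[k kJ _] : has predT J by rewrite has_predT.
  exact: leq_trans q_gt0 (leq_trans (J_q k kJ) (count_size _ _)).
have sum_const (X : Type) (r : seq X) n : \sum_(x <- r) n = size r * n.
  by rewrite big_const_seq count_predT iter_addn_0 mulnC.
have count_sum (X : Type) (a : pred X) r : count a r = \sum_(x <- r) a x.
  by rewrite -sumn_count sumnE big_map.
have double_count : \sum_(p <- W) count (fun k => p \in F k) J =
                    \sum_(k <- J) count (mem (F k)) W.
  rewrite (eq_bigr _ (fun p _ => count_sum _ _ _)) exchange_big.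
  by apply: eq_bigr => k _; rewrite count_sum.
have upper : c * \sum_(p <- W) count (fun k => p \in F k) J <= size W * (size J).-1.
  rewrite big_distrr -sum_const big_seq [X in _ <= X]big_seq /=.
  apply: leq_sum => p pW; rewrite -ltnS (ltn_predK J_gt0) ltnNge.
  by apply/negP => J_le; apply: none; exists p.
have lower : size J * q <= \sum_(k <- J) count (mem (F k)) W.
  rewrite -sum_const big_seq [X in _ <= X]big_seq; apply: leq_sum => k; exact: J_q.
rewrite double_count in upper; nia.
Qed.

Lemma common_subset r q (W : seq T) (J : seq I) :
  r <= q -> size W <= c * (q - r) -> uniq W -> 0 < size J ->
  (forall k, k \in J -> q <= count (mem (F k)) W) ->
  exists C J', [/\ uniq C, size C = r & {subset C <= W}] /\
    [/\ subseq J' J, size J <= size J' * c ^ r & forall k, k \in J' -> {subset C <= F k}].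
Proof.
elim: r q W J => [|r IH] q W J rq W_le W_uniq J_gt0 J_q.
  by exists [::], J; split; split; rewrite ?expn0 ?muln1.
have W_le_cq : size W <= c * q by apply: leq_trans W_le _; rewrite leq_mul2l leq_subr orbT.
have [p pW J_le] := popular_element (leq_ltn_trans (leq0n r) rq) J_gt0 W_le_cq J_q.
rewrite -size_filter in J_le; set J1 := [seq k <- J | p \in F k] in J_le.
have J1_gt0 : 0 < size J1 by nia.
have J1_q k : k \in J1 -> q.-1 <= count (mem (F k)) (rem p W).
  rewrite mem_filter => /andP[pk kJ]; have := J_q k kJ.
  by rewrite (permP (perm_to_rem pW)) /= pk; lia.
have [|C [J' [[C_uniq C_size C_W] [J'J J'_le J'_C]]]] :=
  IH q.-1 (rem p W) J1 ltac:(lia) _ (rem_uniq p W_uniq) J1_gt0 J1_q.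
  rewrite size_rem // (_ : q.-1 - r = q - r.+1); last by lia.
  exact: leq_trans (leq_pred _) W_le.
exists (p :: C), J'; split; split.
- rewrite /= C_uniq andbT; apply/negP => /C_W.
  by rewrite mem_rem_uniq // inE eqxx.
- by rewrite /= C_size.
- by move=> x; rewrite inE => /predU1P[->//|/C_W]; apply: mem_rem.
- exact: subseq_trans J'J (filter_subseq _ _).
- by rewrite expnS mulnCA; apply: leq_trans J_le _; rewrite leq_mul2l J'_le orbT.
- move=> k kJ' x; rewrite inE => /predU1P[->|]; last exact: J'_C.
  by have := mem_subseq J'J kJ'; rewrite mem_filter => /andP[].
Qed.

End CommonSubset.

Lemma RL_set M S s : is_RL M S -> s \in rl_sets S ->
  [/\ sorted ltn s, size s = rl_d S & {in s, forall x, 0 < x <= M * rl_d S}].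
Proof. by move=> /allP S_RL /S_RL /and3P[? /eqP ? /allP ?]. Qed.

Lemma le_RL_nil S T : rl_n S = 0 -> le_RL S T.
Proof. by move=> S0; exists id, (fun _ x => x); split=> i; rewrite S0. Qed.

Lemma le_RL_subseq S T : subseq (rl_sets S) (rl_sets T) -> le_RL S T.
Proof.
move=> /(subseq_nth_index [::]) [k [k_inc k_size k_nth]].
exists k, (fun _ x => x); split=> // i x iS; rewrite /rl_at -k_nth //.
Qed.

Lemma expn_2M_gt0 M d : 0 < (2 * M) ^ (M * d).
Proof. by rewrite expn_gt0; case: M => // M; rewrite muln_gt0. Qed.

Lemma le_RL_large M S T : is_RL M S -> is_RL M T ->
  2 * (M * rl_d S) <= rl_d T -> rl_n S * (2 * M) ^ (M * rl_d S) <= rl_n T ->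
  le_RL S T.
Proof.
move=> S_RL T_RL dT nT; have pow_gt0 := expn_2M_gt0 M (rl_d S).
set r := M * rl_d S in dT nT pow_gt0.
have [S0|S_gt0] := posnP (rl_n S); first exact: le_RL_nil.
have T_gt0 : 0 < rl_n T by apply: leq_trans nT; rewrite muln_gt0 S_gt0.
have J_q k : k \in iota 0 (rl_n T) ->
    rl_d T <= count (mem (rl_at T k)) (iota 1 (M * rl_d T)).
  rewrite mem_iota => kT; have [k_sorted k_size k_range] := RL_set T_RL (mem_nth [::] kT).
  rewrite -size_filter -{1}k_size.
  apply: uniq_leq_size (sorted_uniq ltn_trans ltnn k_sorted) _.
  by move=> x xk; rewrite mem_filter /= xk mem_iota; have := k_range x xk; lia.
have [|||C [J' [[C_uniq C_size _] [J'_sub J'_le J'_C]]]] :=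
  common_subset (c := 2 * M) (r := r) _ _ (iota_uniq 1 (M * rl_d T)) _ J_q.
- by lia.
- by rewrite size_iota; nia.
- by rewrite size_iota.
rewrite size_iota in J'_le.
have nJ' : rl_n S <= size J' by rewrite -(leq_pmul2r pow_gt0); apply: leq_trans nT J'_le.
have iJ' i : i < rl_n S -> i < size J' by move/leq_trans; apply.
have J'_sorted : sorted ltn J' := subseq_sorted ltn_trans J'_sub (iota_ltn_sorted 0 _).
set C' := sort leq C.
have C'_sorted : sorted ltn C'.
  by rewrite ltn_sorted_uniq_leq sort_uniq C_uniq sort_sorted //; apply: leq_total.
have C'_size : size C' = r by rewrite size_sort.
have S_range i x : i < rl_n S -> x \in rl_at S i -> 0 < x <= r.
  by move=> iS; have [_ _] := RL_set S_RL (mem_nth [::] iS); apply.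
have C'_index i x : i < rl_n S -> x \in rl_at S i -> x.-1 < size C'.
  by move=> iS xS; rewrite C'_size; have := S_range i x iS xS; lia.
exists (nth 0 J'), (fun _ x => nth 0 C' x.-1); split.
- move=> i iS; apply: (sorted_ltn_nth ltn_trans 0 J'_sorted) => //.
  + by rewrite inE iJ' // ltnW.
  + by rewrite inE iJ'.
- move=> i iS; suff : nth 0 J' i \in iota 0 (rl_n T) by rewrite mem_iota.
  by apply: (mem_subseq J'_sub); apply/mem_nth/iJ'.
- move=> i x iS xS; apply: J'_C; first exact/mem_nth/iJ'.
  by rewrite -(mem_sort leq); apply: mem_nth; apply: (C'_index i).
- move=> i x y iS xS yS xy; apply: (sorted_ltn_nth ltn_trans 0 C'_sorted).
  + by rewrite inE (C'_index i).
  + by rewrite inE (C'_index i).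
  + by have := S_range i x iS xS; lia.
- by [].
Qed.

Theorem mainTheorem4 (M : nat) (S : nat -> RL) :
  is_infinite_antichain M S ->
  (exists B, forall i, rl_n (S i) <= B) \/ (exists B, forall i, rl_d (S i) <= B).
Proof.
move=> [S_RL S_anti]; left; apply: NNPP => n_bounded.
have n_unbounded B : exists i, B < rl_n (S i).
  apply: NNPP => none; apply: n_bounded; exists B => i; rewrite leqNgt.
  by apply/negP => Bi; apply: none; exists i.
set r := M * rl_d (S 0); set N := rl_n (S 0) * (2 * M) ^ r.
have d_small j : N < rl_n (S j) -> rl_d (S j) < 2 * r.
  move=> Nj; rewrite ltnNge; apply/negP => dj; apply: (S_anti 0 j).
    move=> j0; move: Nj; rewrite -j0 ltnNge leq_pmulr //; exact: expn_2M_gt0.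
  exact: le_RL_large (ltnW Nj).
have [J [J_inc J_large]] := frequently_subseq (unbounded_frequently N n_unbounded).
have J_mono : {homo J : a b / a < b} := homo_ltn ltn_trans J_inc.
have sets_alph k : {subset rl_sets (S (J k)) <= subseqs (iota 0 (M * (2 * r)).+1)}.
  move=> s sS; have [s_sorted _ s_range] := RL_set (S_RL _) sS.
  apply/mem_subseqs/sorted_ltn_subseq_iota => //; apply/allP => x /s_range /andP[_ x_le].
  by rewrite ltnS (leq_trans x_le) // leq_mul2l (ltnW (d_small _ (J_large k))) orbT.
have [a [b [ab sub]]] := higman sets_alph.
apply: (S_anti (J a) (J b)); last exact: le_RL_subseq.
by move/eqP; rewrite ltn_eqF ?J_mono.
Qed.
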